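(* Let $M$ and $N$ be $\lambda$-terms. Assume there exists a reduct $N'$ of $N$ (i.e. $N \twoheadrightarrow_\beta N'$) such that for no reduct $M'$ of $M$ it holds that $M' \le_c N'$. Then $M \neq_\beta N$.
   Context: Untyped $\lambda$-calculus with $\beta$-reduction. A head reduction step is a step $\lambda x_1\ldots x_n.(\lambda y.P)Q Q_1\ldots Q_m \to \lambda x_1\ldots x_n.P[y:=Q] Q_1\ldots Q_m$; a head normal form (hnf) is $\lambda x_1\ldots x_n.\,y M_1\ldots M_m$. The clocked Böhm tree $\mathrm{cBT}(t)$ is defined coinductively: if $t$ has no hnf, $\mathrm{cBT}(t)=\bot$ (unannotated); otherwise $t$ head-reduces in $k$ steps to an hnf $\lambda x_1\ldots x_n.\,y M_1\ldots M_m$, and $\mathrm{cBT}(t)$ is $\lambda x_1\ldots x_n.\,y\,\mathrm{cBT}(M_1)\ldots\mathrm{cBT}(M_m)$ with its root annotated by $k$. $\mathrm{BT}(t)$ is $\mathrm{cBT}(t)$ with annotations erased. For $\lambda$-terms $P,Q$, $P \le_c Q$ means: $\mathrm{BT}(P) = \mathrm{BT}(Q)$ and at every position of these trees either neither $\mathrm{cBT}(P)$ nor $\mathrm{cBT}(Q)$ is annotated, or both are, with annotations $k_1$ and $k_2$ respectively satisfying $k_1 \le k_2$. *)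

From Stdlib Require Import Arith List Relations ClassicalEpsilon.
Import ListNotations.

Inductive term : Type :=
| Var : nat -> term
| Lam : term -> term
| App : term -> term -> term.

Fixpoint lift (c : nat) (t : term) : term :=
  match t with
  | Var n => if n <? c then Var n else Var (S n)
  | Lam b => Lam (lift (S c) b)
  | App a b => App (lift c a) (lift c b)
  end.

(* subst k u t : t[k := u], removing binder k (indices > k decremented) *)
Fixpoint subst (k : nat) (u : term) (t : term) : term :=
  match t with
  | Var n => if n <? k then Var n else if n =? k then u else Var (pred n)
  | Lam b => Lam (subst (S k) (lift 0 u) b)
  | App a b => App (subst k u a) (subst k u b)
  end.

Inductive beta : term -> term -> Prop :=
| beta_redex : forall b u, beta (App (Lam b) u) (subst 0 u b)
| beta_lam : forall b b', beta b b' -> beta (Lam b) (Lam b')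
| beta_appl : forall a a' b, beta a a' -> beta (App a b) (App a' b)
| beta_appr : forall a b b', beta b b' -> beta (App a b) (App a b').

Definition red : term -> term -> Prop := clos_refl_trans term beta.
Definition conv : term -> term -> Prop := clos_refl_sym_trans term beta.

(* head reduction step:
   \x1..xn.(\y.P) Q Q1..Qm -> \x1..xn.P[y:=Q] Q1..Qm *)
Definition is_lam (t : term) : bool :=
  match t with Lam _ => true | _ => false end.

Inductive hstep : term -> term -> Prop :=
| hstep_redex : forall b u, hstep (App (Lam b) u) (subst 0 u b)
| hstep_lam : forall b b', hstep b b' -> hstep (Lam b) (Lam b')
| hstep_app : forall a a' b, is_lam a = false -> hstep a a' ->
    hstep (App a b) (App a' b).

Inductive hsteps : nat -> term -> term -> Prop :=
| hsteps_0 : forall t, hsteps 0 t t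
| hsteps_S : forall k t t' t'', hstep t t' -> hsteps k t' t'' ->
    hsteps (S k) t t''.

Fixpoint lams (n : nat) (t : term) : term :=
  match n with 0 => t | S n' => Lam (lams n' t) end.

Definition apps (h : term) (args : list term) : term := fold_left App args h.

(* head normal form \x1..xn. y M1..Mm, written lams n (apps (Var y) args) *)
Definition hnf_data_spec (t : term) (d : nat * nat * nat * list term) : Prop :=
  let '(k, n, y, args) := d in hsteps k t (lams n (apps (Var y) args)).

Definition hnf_data (t : term) : option (nat * nat * nat * list term) :=
  match excluded_middle_informative (exists d, hnf_data_spec t d) with
  | left H => Some (proj1_sig (constructive_indefinite_description _ H))
  | right _ => None
  end.

(* clocked Böhm trees: Bot, or a node with annotation k, n abstractions,
   head variable y (de Bruijn index), m children *)
CoInductive cbt : Type :=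
| Bot : cbt
| Node : nat -> nat -> nat -> nat -> (nat -> cbt) -> cbt.

CoFixpoint cBT (t : term) : cbt :=
  match hnf_data t with
  | None => Bot
  | Some (k, n, y, args) =>
      Node k n y (length args) (fun i => cBT (nth i args (Var 0)))
  end.

CoInductive cbt_le : cbt -> cbt -> Prop :=
| cbt_le_bot : cbt_le Bot Bot
| cbt_le_node : forall k1 k2 n y m f g,
    k1 <= k2 -> (forall i, i < m -> cbt_le (f i) (g i)) ->
    cbt_le (Node k1 n y m f) (Node k2 n y m g).

Definition le_c (P Q : term) : Prop := cbt_le (cBT P) (cBT Q).

(** If [M =_beta N] then [M =_beta N'], so by Church-Rosser [M] and [N'] have
    a common reduct [Z].  Reduction can only shorten clocks: if [Q ->> P], then [P]
    has an hnf iff [Q] has one, with the same head variable and abstractions,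
    arguments that are reducts of those of [Q], and a head-reduction count that
    is not larger.  Coinductively, [P <=_c Q]; for [Q := N'] and [P := Z] this
    contradicts the hypothesis.  The clock comparison is proved first for one
    parallel step, by induction on the number of head steps, pushing a parallel
    step past a weak-head step in either direction. *)

From Stdlib Require Import Arith Lia List Relations ClassicalEpsilon.
Import ListNotations.

Lemma clos_refl_trans_map {A B : Type} (R : relation A) (S : relation B) (f : A -> B) :
  (forall x y, R x y -> S (f x) (f y)) ->
  forall x y, clos_refl_trans A R x y -> clos_refl_trans B S (f x) (f y).
Proof.
  intros Hf x y H; induction H; [apply rt_step; auto | apply rt_refl | eapply rt_trans; eauto].
Qed.

Lemma lift_lift : forall t c d, c <= d -> lift (S d) (lift c t) = lift c (lift d t).
Proof.
  induction t; intros c d H; simpl.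
  - destruct (Nat.ltb_spec n c); destruct (Nat.ltb_spec n d); simpl;
    repeat match goal with |- context [?a <? ?b] => destruct (Nat.ltb_spec a b) end;
    try reflexivity; lia.
  - f_equal. apply IHt. lia.
  - f_equal; auto.
Qed.

Ltac crunch :=
  repeat (cbn [lift subst pred]; match goal with
  | |- context [?a <? ?b] => destruct (Nat.ltb_spec a b)
  | |- context [?a =? ?b] => destruct (Nat.eqb_spec a b)
  end); try reflexivity; try (exfalso; lia).

Lemma subst_lift : forall t k u, subst k u (lift k t) = t.
Proof.
  induction t; intros k u; simpl.
  - crunch; f_equal; lia.
  - f_equal. apply IHt.
  - f_equal; auto.
Qed.

Lemma lift_subst_le : forall t c k u, c <= k ->
  lift c (subst k u t) = subst (S k) (lift c u) (lift c t).
Proof.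
  induction t; intros c k u H; simpl.
  - crunch; f_equal; lia.
  - f_equal. rewrite IHt by lia. f_equal. apply lift_lift. lia.
  - f_equal; auto.
Qed.

Lemma lift_subst_ge : forall t c k u, k <= c ->
  lift c (subst k u t) = subst k (lift c u) (lift (S c) t).
Proof.
  induction t; intros c k u H; simpl.
  - crunch; f_equal; lia.
  - f_equal. rewrite IHt by lia. f_equal. apply lift_lift. lia.
  - f_equal; auto.
Qed.

Lemma subst_subst : forall t j k u v, j <= k ->
  subst k v (subst j u t) = subst j (subst k v u) (subst (S k) (lift j v) t).
Proof.
  induction t; intros j k u v H; simpl.
  - crunch; try (f_equal; lia). subst. rewrite subst_lift. reflexivity.
  - f_equal. rewrite IHt by lia. f_equal.
    + symmetry. apply lift_subst_le. lia.
    + f_equal. apply lift_lift. lia.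
  - f_equal; auto.
Qed.

Inductive par : term -> term -> Prop :=
| par_var : forall n, par (Var n) (Var n)
| par_lam : forall b b', par b b' -> par (Lam b) (Lam b')
| par_app : forall a a' c c', par a a' -> par c c' -> par (App a c) (App a' c')
| par_beta : forall b b' c c', par b b' -> par c c' ->
    par (App (Lam b) c) (subst 0 c' b').

Lemma par_refl : forall t, par t t.
Proof. induction t; constructor; auto. Qed.

Lemma beta_par : forall s t, beta s t -> par s t.
Proof. induction 1; constructor; auto using par_refl. Qed.

Lemma red_lam : forall b b', red b b' -> red (Lam b) (Lam b').
Proof. apply clos_refl_trans_map. constructor; auto. Qed.

Lemma red_app : forall a a' c c', red a a' -> red c c' -> red (App a c) (App a' c').
Proof.
  intros a a' c c' Ha Hc. apply rt_trans with (App a' c).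
  - apply (clos_refl_trans_map beta beta (fun x => App x c)); auto. constructor; auto.
  - apply (clos_refl_trans_map beta beta (App a')); auto. constructor; auto.
Qed.

Lemma par_red : forall s t, par s t -> red s t.
Proof.
  induction 1.
  - apply rt_refl.
  - apply red_lam; auto.
  - apply red_app; auto.
  - eapply rt_trans; [apply red_app; [apply red_lam|]; eauto|].
    apply rt_step. constructor.
Qed.

Lemma par_lift : forall t t', par t t' -> forall c, par (lift c t) (lift c t').
Proof.
  induction 1; intros; simpl.
  - apply par_refl.
  - constructor; auto.
  - constructor; auto.
  - rewrite lift_subst_ge by lia. constructor; auto.
Qed.

Lemma par_subst : forall t t', par t t' -> forall k u u', par u u' ->
  par (subst k u t) (subst k u' t').
Proof.
  induction 1; intros k u u' Hu; simpl.
  - crunch; apply par_refl || auto.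
  - constructor. apply IHpar. apply par_lift. auto.
  - constructor; auto.
  - rewrite subst_subst by lia. constructor; auto. apply IHpar1. apply par_lift; auto.
Qed.

Lemma par_lam_inv : forall b N, par (Lam b) N -> exists b', N = Lam b' /\ par b b'.
Proof. intros b N H; inversion H; subst; eauto. Qed.

Lemma par_diamond : forall M N1, par M N1 -> forall N2, par M N2 ->
  exists Z, par N1 Z /\ par N2 Z.
Proof.
  induction 1; intros N2 H2.
  - inversion H2; subst. exists (Var n); split; constructor.
  - inversion H2; subst. destruct (IHpar _ H1) as [Z [? ?]].
    exists (Lam Z); split; constructor; auto.
  - inversion H2; subst.
    + match goal with H : par a _ |- _ => destruct (IHpar1 _ H) as [Z1 [? ?]] end.
      match goal with H : par c _ |- _ => destruct (IHpar2 _ H) as [Z2 [? ?]] end.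
      exists (App Z1 Z2); split; constructor; auto.
    + rename b' into bb, c'0 into cc.
      destruct (par_lam_inv _ _ H) as [b1 [-> Hb1]].
      destruct (IHpar1 (Lam bb)) as [Z1 [HZ1 HZ2]]; [constructor; auto|].
      destruct (par_lam_inv _ _ HZ2) as [zb [-> Hzb2]].
      inversion HZ1; subst.
      match goal with H : par c cc |- _ => destruct (IHpar2 _ H) as [Z2 [? ?]] end.
      exists (subst 0 Z2 zb); split.
      * constructor; auto.
      * apply par_subst; auto.
  - inversion H2; subst.
    + match goal with H : par (Lam b) _ |- _ => destruct (par_lam_inv _ _ H) as [b1 [-> Hb1]] end.
      destruct (IHpar1 _ Hb1) as [Z1 [? ?]].
      match goal with H : par c _ |- _ => destruct (IHpar2 _ H) as [Z2 [? ?]] end.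
      exists (subst 0 Z2 Z1); split.
      * apply par_subst; auto.
      * constructor; auto.
    + match goal with H : par b _ |- _ => destruct (IHpar1 _ H) as [Z1 [? ?]] end.
      match goal with H : par c _ |- _ => destruct (IHpar2 _ H) as [Z2 [? ?]] end.
      exists (subst 0 Z2 Z1); split; apply par_subst; auto.
Qed.

Lemma par_strip : forall M N2, red M N2 -> forall N1, par M N1 ->
  exists Z, red N1 Z /\ par N2 Z.
Proof.
  induction 1 as [M N2 H|M|M X N2 _ IH1 _ IH2]; intros N1 H1.
  - destruct (par_diamond _ _ H1 _ (beta_par _ _ H)) as [Z [? ?]].
    exists Z; split; auto. apply par_red; auto.
  - exists N1; split; auto. apply rt_refl.
  - destruct (IH1 _ H1) as [Z1 [? HZ1]].
    destruct (IH2 _ HZ1) as [Z2 [? ?]].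
    exists Z2; split; auto. eapply rt_trans; eauto.
Qed.

Lemma red_confluent : forall M N1, red M N1 -> forall N2, red M N2 ->
  exists Z, red N1 Z /\ red N2 Z.
Proof.
  induction 1 as [M N1 H|M|M X N1 _ IH1 _ IH2]; intros N2 H2.
  - destruct (par_strip _ _ H2 _ (beta_par _ _ H)) as [Z [? ?]].
    exists Z; split; auto. apply par_red; auto.
  - exists N2; split; auto. apply rt_refl.
  - destruct (IH1 _ H2) as [Z1 [HZ1 ?]].
    destruct (IH2 _ HZ1) as [Z2 [? ?]].
    exists Z2; split; auto. eapply rt_trans; eauto.
Qed.

Lemma conv_common_reduct : forall M N, conv M N -> exists Z, red M Z /\ red N Z.
Proof.
  induction 1 as [M N H|M|M N _ IH|M X N _ IH1 _ IH2].
  - exists N; split; [apply rt_step; auto|apply rt_refl].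
  - exists M; split; apply rt_refl.
  - destruct IH as [Z [? ?]]; eauto.
  - destruct IH1 as [Z1 [? HZ1]], IH2 as [Z2 [HZ2 ?]].
    destruct (red_confluent _ _ HZ1 _ HZ2) as [W [? ?]].
    exists W; split; eapply rt_trans; eauto.
Qed.

Inductive whstep : term -> term -> Prop :=
| wh_redex : forall b u, whstep (App (Lam b) u) (subst 0 u b)
| wh_app : forall a a' b, whstep a a' -> whstep (App a b) (App a' b).

Definition whsteps : term -> term -> Prop := clos_refl_trans term whstep.

(* Internal parallel reduction: a parallel step that contracts no weak-head redex. *)
Inductive wpar : term -> term -> Prop :=
| wpar_var : forall n, wpar (Var n) (Var n)
| wpar_lam : forall b b', par b b' -> wpar (Lam b) (Lam b')
| wpar_app : forall a a' c c', wpar a a' -> par c c' -> wpar (App a c) (App a' c').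

Definition whsteps_wpar (M N : term) : Prop := exists M', whsteps M M' /\ wpar M' N.

Lemma whsteps_app : forall a a' c, whsteps a a' -> whsteps (App a c) (App a' c).
Proof.
  intros a a' c. apply (clos_refl_trans_map whstep whstep (fun x => App x c)).
  constructor; auto.
Qed.

Lemma whstep_subst : forall s s', whstep s s' -> forall k u,
  whstep (subst k u s) (subst k u s').
Proof.
  induction 1; intros k v; simpl.
  - rewrite subst_subst by lia. constructor.
  - constructor; auto.
Qed.

Lemma whsteps_subst : forall k u s s', whsteps s s' -> whsteps (subst k u s) (subst k u s').
Proof. intros k u. apply clos_refl_trans_map. intros; apply whstep_subst; auto. Qed.

Lemma wpar_subst : forall L L', wpar L L' -> forall k u u', par u u' ->
  whsteps_wpar u u' -> whsteps_wpar (subst k u L) (subst k u' L').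
Proof.
  induction 1; intros k u u' Hu Hwu; simpl.
  - crunch; try (eexists; split; [apply rt_refl|constructor]). exact Hwu.
  - eexists; split; [apply rt_refl|]. constructor. apply par_subst; auto. apply par_lift; auto.
  - destruct (IHwpar k u u' Hu Hwu) as [X [? ?]].
    exists (App X (subst k u c)); split.
    + apply whsteps_app; auto.
    + constructor; auto. apply par_subst; auto.
Qed.

Lemma par_whsteps_wpar : forall M N, par M N -> whsteps_wpar M N.
Proof.
  induction 1.
  - eexists; split; [apply rt_refl|constructor].
  - eexists; split; [apply rt_refl|constructor; auto].
  - destruct IHpar1 as [a1 [? ?]]. exists (App a1 c); split.
    + apply whsteps_app; auto.
    + constructor; auto.
  - destruct IHpar1 as [L [? ?]].
    destruct (wpar_subst _ _ H2 0 c c' H0 IHpar2) as [X [? ?]].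
    exists X; split; auto.
    eapply rt_trans; [apply rt_step; constructor|].
    eapply rt_trans; [apply whsteps_subst; eauto|]. auto.
Qed.

Lemma wpar_whstep : forall N N', whstep N N' -> forall M, wpar M N ->
  exists M', whstep M M' /\ par M' N'.
Proof.
  induction 1; intros M HM.
  - inversion HM; subst.
    match goal with H : wpar _ (Lam _) |- _ => inversion H; subst end.
    eexists; split; [constructor|]. apply par_subst; auto.
  - inversion HM; subst.
    match goal with H : wpar _ a |- _ => destruct (IHwhstep _ H) as [a1 [? ?]] end.
    exists (App a1 c); split; constructor; auto.
Qed.

Lemma par_whstep : forall M M1, whstep M M1 -> forall N, par M N ->
  exists N1, (N1 = N \/ whstep N N1) /\ par M1 N1.
Proof.
  induction 1; intros N HN.
  - inversion HN; subst.
    + destruct (par_lam_inv _ _ H1) as [b1 [-> ?]].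
      eexists; split; [right; constructor|]. apply par_subst; auto.
    + eexists; split; [left; reflexivity|]. apply par_subst; auto.
  - inversion HN; subst.
    + destruct (IHwhstep _ H2) as [N1 [[E|?] ?]].
      * subst N1. exists (App a'0 c'); split; [left; auto|constructor; auto].
      * exists (App N1 c'); split; [right; constructor; auto|constructor; auto].
    + inversion H.
Qed.

Notation hnf n y args := (lams n (apps (Var y) args)).

Lemma whstep_hstep : forall s t, whstep s t -> hstep s t.
Proof.
  induction 1.
  - constructor.
  - constructor; auto. inversion H; reflexivity.
Qed.

Lemma hstep_whstep : forall t t', hstep t t' -> is_lam t = false -> whstep t t'.
Proof.
  induction 1; intros E; simpl in E; try discriminate.
  - constructor.
  - constructor; auto.
Qed.

Lemma hsteps_add : forall a x y, hsteps a x y -> forall b z, hsteps b y z -> hsteps (a + b) x z.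
Proof. induction 1; intros; simpl; auto. econstructor; eauto. Qed.

Lemma whsteps_hsteps : forall s t, whsteps s t -> exists j, hsteps j s t.
Proof.
  induction 1 as [s t H|s|s u t _ [j1 H1] _ [j2 H2]].
  - exists 1. econstructor; [apply whstep_hstep; eauto|constructor].
  - exists 0. constructor.
  - exists (j1 + j2). eapply hsteps_add; eauto.
Qed.

Lemma hsteps_lam : forall k b b', hsteps k b b' -> hsteps k (Lam b) (Lam b').
Proof. induction 1; econstructor; eauto. constructor; auto. Qed.

Lemma hsteps_lam_inv : forall k b X, hsteps k (Lam b) X ->
  exists X0, X = Lam X0 /\ hsteps k b X0.
Proof.
  intros k b X H. remember (Lam b) as t eqn:E. revert b E.
  induction H; intros b0 E; subst.
  - eexists; split; [reflexivity|constructor].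
  - inversion H; subst. destruct (IHhsteps _ eq_refl) as [X0 [-> ?]].
    eexists; split; [reflexivity|]. econstructor; eauto.
Qed.

Lemma apps_snoc : forall h l x, apps h (l ++ [x]) = App (apps h l) x.
Proof. intros. unfold apps. rewrite fold_left_app. reflexivity. Qed.

Lemma is_lam_apps : forall y l, is_lam (apps (Var y) l) = false.
Proof.
  intros y l. induction l using rev_ind; [reflexivity|]. rewrite apps_snoc. reflexivity.
Qed.

Lemma wpar_apps_inv : forall y args M, wpar M (apps (Var y) args) ->
  exists args1, M = apps (Var y) args1.
Proof.
  intros y args. induction args as [|x l IH] using rev_ind; intros M H.
  - inversion H; subst. exists []; auto.
  - rewrite apps_snoc in H. inversion H; subst.
    match goal with H : wpar _ (apps _ _) |- _ => destruct (IH _ H) as [a1 ->] end.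
    exists (a1 ++ [c]). rewrite apps_snoc; auto.
Qed.

Lemma par_apps_inv : forall y args N, par (apps (Var y) args) N ->
  exists args', N = apps (Var y) args' /\ Forall2 par args args'.
Proof.
  intros y args. induction args as [|x l IH] using rev_ind; intros N H.
  - inversion H; subst. exists []; split; auto.
  - rewrite apps_snoc in H. inversion H; subst.
    + match goal with H : par (apps _ _) _ |- _ => destruct (IH _ H) as [a1 [-> ?]] end.
      exists (a1 ++ [c']); split.
      * rewrite apps_snoc; auto.
      * apply Forall2_app; auto.
    + pose proof (is_lam_apps y l) as Z.
      match goal with H : Lam _ = apps _ _ |- _ => rewrite <- H in Z end. discriminate.
Qed.

Lemma hnf_lam_inv : forall n y args X0, Lam X0 = hnf n y args ->
  exists n', n = S n' /\ X0 = hnf n' y args.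
Proof.
  intros [|n] y args X0 H; simpl in H.
  - pose proof (is_lam_apps y args) as Z. rewrite <- H in Z. discriminate.
  - inversion H; eauto.
Qed.

Lemma is_lam_hnf : forall n y args, is_lam (hnf n y args) = false -> n = 0.
Proof. intros [|n] y args H; simpl in H; auto; discriminate. Qed.

Lemma Forall2_diag {A : Type} (R : A -> A -> Prop) :
  (forall x, R x x) -> forall l, Forall2 R l l.
Proof. intros HR l; induction l; constructor; auto. Qed.

Lemma Forall2_trans {A : Type} (R : A -> A -> Prop) :
  (forall x y z, R x y -> R y z -> R x z) ->
  forall l1 l2 l3, Forall2 R l1 l2 -> Forall2 R l2 l3 -> Forall2 R l1 l3.
Proof.
  intros HR l1 l2 l3 F12; revert l3.
  induction F12; intros l3 F23; inversion F23; subst; constructor; eauto.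
Qed.

Lemma Forall2_nth {A B : Type} (R : A -> B -> Prop) (a : A) (b : B) :
  forall l1 l2, Forall2 R l1 l2 -> forall i, i < length l1 -> R (nth i l1 a) (nth i l2 b).
Proof.
  induction 1; intros i Hi; simpl in *; [lia|]. destruct i; auto. apply IHForall2. lia.
Qed.

Definition clock_fwd (k : nat) (M N : term) : Prop :=
  forall n y args, hsteps k M (hnf n y args) ->
  exists k' args', k' <= k /\ hsteps k' N (hnf n y args') /\ Forall2 par args args'.

Lemma clock_fwd_lam : forall k,
  (forall M N, is_lam M = false -> par M N -> clock_fwd k M N) ->
  forall M N, par M N -> clock_fwd k M N.
Proof.
  intros k Hnonlam M. induction M as [v|M0 IHM|a _ c _]; intros N HP; auto.
  intros n y args HS.
  destruct (par_lam_inv _ _ HP) as [N0 [-> HP0]].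
  destruct (hsteps_lam_inv _ _ _ HS) as [X0 [E HS0]].
  destruct (hnf_lam_inv _ _ _ _ (eq_sym E)) as [n' [-> ->]].
  destruct (IHM _ HP0 _ _ _ HS0) as [k' [a' [? [? ?]]]].
  exists k', a'; repeat split; auto. apply hsteps_lam; auto.
Qed.

(* A head step from a non-abstraction is a weak-head step, which the parallel
   step either absorbs or is matched by one weak-head step on the other side. *)
Lemma clock_fwd_nonlam : forall k,
  (forall j M N, j < k -> par M N -> clock_fwd j M N) ->
  forall M N, is_lam M = false -> par M N -> clock_fwd k M N.
Proof.
  intros k IHk M N HL HP n y args HS. destruct k as [|k].
  - inversion HS; subst. rewrite (is_lam_hnf _ _ _ HL) in *.
    destruct (par_apps_inv _ _ _ HP) as [a' [-> ?]].
    exists 0, a'; repeat split; auto. constructor.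
  - inversion HS as [|? ? M1 ? Hstep Hrest]; subst.
    destruct (par_whstep _ _ (hstep_whstep _ _ Hstep HL) _ HP) as [N1 [[E|W] HP1]];
    destruct (IHk k _ _ (Nat.lt_succ_diag_r _) HP1 _ _ _ Hrest) as [k' [a' [? [? ?]]]].
    + subst N1. exists k', a'; repeat split; auto.
    + exists (S k'), a'; repeat split; auto; [lia|].
      econstructor; [apply whstep_hstep|]; eauto.
Qed.

Lemma par_clock_fwd : forall k M N, par M N -> clock_fwd k M N.
Proof.
  induction k as [k IHk] using lt_wf_ind.
  apply clock_fwd_lam, clock_fwd_nonlam. auto.
Qed.

Lemma red_clock_fwd : forall Q P, red Q P -> forall k n y args,
  hsteps k Q (hnf n y args) ->
  exists k' args', k' <= k /\ hsteps k' P (hnf n y args') /\ Forall2 red args args'.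
Proof.
  induction 1 as [Q P H|Q|Q X P _ IH1 _ IH2]; intros k n y args HS.
  - destruct (par_clock_fwd _ _ _ (beta_par _ _ H) _ _ _ HS) as [k' [a' [? [? ?]]]].
    exists k', a'; repeat split; auto. eapply Forall2_impl; [apply par_red|eauto].
  - exists k, args; repeat split; auto. apply Forall2_diag, rt_refl.
  - destruct (IH1 _ _ _ _ HS) as [k1 [a1 [? [HS1 ?]]]].
    destruct (IH2 _ _ _ _ HS1) as [k2 [a2 [? [? ?]]]].
    exists k2, a2; repeat split; auto; [lia|].
    eapply Forall2_trans; [|eauto..]. intros; eapply rt_trans; eauto.
Qed.

Definition hnf_bwd (k : nat) (N M : term) : Prop :=
  forall n y args, hsteps k N (hnf n y args) -> exists k' args', hsteps k' M (hnf n y args').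

Lemma hnf_bwd_lam : forall k,
  (forall M N, is_lam N = false -> par M N -> hnf_bwd k N M) ->
  forall M N, par M N -> hnf_bwd k N M.
Proof.
  intros k Hnonlam M N. revert M. induction N as [v|N0 IHN|a _ c _]; intros M HP; auto.
  intros n y args HS.
  destruct (par_whsteps_wpar _ _ HP) as [M1 [HW HWP]].
  destruct (whsteps_hsteps _ _ HW) as [j Hj].
  inversion HWP as [|b1 ? HP1|]; subst.
  destruct (hsteps_lam_inv _ _ _ HS) as [X0 [E HS0]].
  destruct (hnf_lam_inv _ _ _ _ (eq_sym E)) as [n' [-> ->]].
  destruct (IHN _ HP1 _ _ _ HS0) as [k' [a' ?]].
  exists (j + k'), a'. eapply hsteps_add; eauto. apply hsteps_lam; auto.
Qed.

Lemma hnf_bwd_nonlam : forall k,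
  (forall j M N, j < k -> par M N -> hnf_bwd j N M) ->
  forall M N, is_lam N = false -> par M N -> hnf_bwd k N M.
Proof.
  intros k IHk M N HL HP n y args HS.
  destruct (par_whsteps_wpar _ _ HP) as [M1 [HW HWP]].
  destruct (whsteps_hsteps _ _ HW) as [j Hj].
  destruct k as [|k].
  - inversion HS; subst. rewrite (is_lam_hnf _ _ _ HL) in *.
    destruct (wpar_apps_inv _ _ _ HWP) as [a1 ->].
    exists j, a1; auto.
  - inversion HS as [|? ? N1 ? Hstep Hrest]; subst.
    destruct (wpar_whstep _ _ (hstep_whstep _ _ Hstep HL) _ HWP) as [M2 [W2 HP2]].
    destruct (IHk k _ _ (Nat.lt_succ_diag_r _) HP2 _ _ _ Hrest) as [k' [a' ?]].
    exists (j + S k'), a'. eapply hsteps_add; eauto.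
    econstructor; [apply whstep_hstep|]; eauto.
Qed.

Lemma par_hnf_bwd : forall k M N, par M N -> hnf_bwd k N M.
Proof.
  induction k as [k IHk] using lt_wf_ind.
  apply hnf_bwd_lam, hnf_bwd_nonlam. auto.
Qed.

Lemma red_hnf_bwd : forall Q P, red Q P -> forall k, hnf_bwd k P Q.
Proof.
  induction 1 as [Q P H|Q|Q X P _ IH1 _ IH2]; intros k n y args HS.
  - exact (par_hnf_bwd k _ _ (beta_par _ _ H) _ _ _ HS).
  - eauto.
  - destruct (IH2 _ _ _ _ HS) as [k1 [a1 HS1]]. exact (IH1 _ _ _ _ HS1).
Qed.

Lemma hstep_det : forall t t1, hstep t t1 -> forall t2, hstep t t2 -> t1 = t2.
Proof.
  induction 1; intros t2 H2; inversion H2; subst; try discriminate; f_equal; auto.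
Qed.

Lemma hstep_apps : forall y args t, ~ hstep (apps (Var y) args) t.
Proof.
  intros y args. induction args as [|x l IH] using rev_ind; intros t H.
  - inversion H.
  - rewrite apps_snoc in H. inversion H; subst.
    + pose proof (is_lam_apps y l) as Z. rewrite <- H1 in Z. discriminate.
    + eapply IH; eauto.
Qed.

Lemma hstep_hnf : forall n y args t, ~ hstep (hnf n y args) t.
Proof.
  induction n; intros y args t H; simpl in H.
  - eapply hstep_apps; eauto.
  - inversion H; subst. eapply IHn; eauto.
Qed.

Lemma hsteps_normal_unique : forall k1 t H1, hsteps k1 t H1 -> (forall u, ~ hstep H1 u) ->
  forall k2 H2, hsteps k2 t H2 -> (forall u, ~ hstep H2 u) -> k1 = k2 /\ H1 = H2.
Proof.
  induction 1 as [t|k1 t t1 H1 Hstep Hrest IH]; intros N1 k2 H2 HS2 N2.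
  - inversion HS2; subst; auto. exfalso; eapply N1; eauto.
  - inversion HS2 as [|k2' ? t2 ? Hstep2 Hrest2]; subst.
    + exfalso; eapply N2; eauto.
    + rewrite <- (hstep_det _ _ Hstep _ Hstep2) in Hrest2.
      destruct (IH N1 _ _ Hrest2 N2); subst; auto.
Qed.

Lemma apps_inj : forall y1 a1 y2 a2,
  apps (Var y1) a1 = apps (Var y2) a2 -> y1 = y2 /\ a1 = a2.
Proof.
  intros y1 a1. induction a1 as [|x l IH] using rev_ind; intros y2 a2 E;
  destruct a2 as [|x2 l2 _] using rev_ind.
  - simpl in E. inversion E; auto.
  - rewrite apps_snoc in E. discriminate.
  - rewrite apps_snoc in E. discriminate.
  - rewrite !apps_snoc in E. inversion E as [[E1 E2]].
    destruct (IH _ _ E1); subst; auto.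
Qed.

Lemma hnf_inj : forall n1 y1 a1 n2 y2 a2,
  hnf n1 y1 a1 = hnf n2 y2 a2 -> n1 = n2 /\ y1 = y2 /\ a1 = a2.
Proof.
  induction n1; intros y1 a1 [|n2] y2 a2 E; simpl in E.
  - destruct (apps_inj _ _ _ _ E); auto.
  - pose proof (is_lam_apps y1 a1) as Z. rewrite E in Z. discriminate.
  - pose proof (is_lam_apps y2 a2) as Z. rewrite <- E in Z. discriminate.
  - inversion E as [E']. destruct (IHn1 _ _ _ _ _ E') as [? [? ?]]; auto.
Qed.

Lemma hnf_data_some : forall t d, hnf_data t = Some d -> hnf_data_spec t d.
Proof.
  intros t d. unfold hnf_data. destruct excluded_middle_informative; intro E.
  - inversion E; subst. apply proj2_sig.
  - discriminate.
Qed.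

Lemma hnf_data_none : forall t, hnf_data t = None -> forall d, ~ hnf_data_spec t d.
Proof.
  intros t. unfold hnf_data. destruct excluded_middle_informative as [H|H]; intro E.
  - discriminate.
  - intros d Hd. apply H. eauto.
Qed.

Lemma red_hnf_data : forall Q P, red Q P ->
  (hnf_data P = None /\ hnf_data Q = None) \/
  exists kP kQ n y aP aQ, hnf_data P = Some (kP, n, y, aP) /\
    hnf_data Q = Some (kQ, n, y, aQ) /\ kP <= kQ /\ Forall2 red aQ aP.
Proof.
  intros Q P HR.
  destruct (hnf_data P) as [[[[kP nP] yP] aP]|] eqn:EP;
  destruct (hnf_data Q) as [[[[kQ nQ] yQ] aQ]|] eqn:EQ.
  - right. pose proof (hnf_data_some _ _ EP) as SP. pose proof (hnf_data_some _ _ EQ) as SQ.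
    simpl in SP, SQ.
    destruct (red_clock_fwd _ _ HR _ _ _ _ SQ) as [k' [a' [Hk [HS HF]]]].
    destruct (hsteps_normal_unique _ _ _ SP (hstep_hnf _ _ _) _ _ HS (hstep_hnf _ _ _))
      as [<- E].
    destruct (hnf_inj _ _ _ _ _ _ E) as [<- [<- <-]].
    exists kP, kQ, nP, yP, aP, aQ; auto.
  - exfalso. pose proof (hnf_data_some _ _ EP) as SP. simpl in SP.
    destruct (red_hnf_bwd _ _ HR _ _ _ _ SP) as [k' [a' HS]].
    exact (hnf_data_none _ EQ (k', nP, yP, a') HS).
  - exfalso. pose proof (hnf_data_some _ _ EQ) as SQ. simpl in SQ.
    destruct (red_clock_fwd _ _ HR _ _ _ _ SQ) as [k' [a' [_ [HS _]]]].
    exact (hnf_data_none _ EP (k', nQ, yQ, a') HS).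
  - left; auto.
Qed.

Definition cbt_force (c : cbt) : cbt :=
  match c with Bot => Bot | Node k n y m f => Node k n y m f end.

Lemma cbt_force_eq : forall c, c = cbt_force c.
Proof. destruct c; reflexivity. Qed.

Lemma cBT_unfold : forall t, cBT t =
  match hnf_data t with
  | None => Bot
  | Some (k, n, y, args) => Node k n y (length args) (fun i => cBT (nth i args (Var 0)))
  end.
Proof.
  intros t. rewrite (cbt_force_eq (cBT t)). simpl.
  destruct (hnf_data t) as [[[[k n] y] args]|]; reflexivity.
Qed.

Lemma cbt_le_coind : forall R : cbt -> cbt -> Prop,
  (forall c1 c2, R c1 c2 -> (c1 = Bot /\ c2 = Bot) \/
     exists k1 k2 n y m f g, c1 = Node k1 n y m f /\ c2 = Node k2 n y m g /\ k1 <= k2 /\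
       forall i, i < m -> R (f i) (g i)) ->
  forall c1 c2, R c1 c2 -> cbt_le c1 c2.
Proof.
  intros R HR. cofix CIH. intros c1 c2 H.
  destruct (HR _ _ H) as [[-> ->] | (k1 & k2 & n & y & m & f & g & -> & -> & Hk & Hf)].
  - constructor.
  - constructor; auto.
Qed.

Lemma red_le_c : forall Q P, red Q P -> le_c P Q.
Proof.
  intros Q P H. unfold le_c.
  apply (cbt_le_coind (fun c1 c2 => exists P Q, red Q P /\ c1 = cBT P /\ c2 = cBT Q)); [|eauto].
  clear. intros c1 c2 (P & Q & HR & -> & ->).
  rewrite (cBT_unfold P), (cBT_unfold Q).
  destruct (red_hnf_data _ _ HR)
    as [[-> ->] | (kP & kQ & n & y & aP & aQ & -> & -> & Hk & HF)]; [left; auto|right].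
  pose proof (Forall2_length HF) as HL.
  exists kP, kQ, n, y, (length aP), (fun i => cBT (nth i aP (Var 0))),
    (fun i => cBT (nth i aQ (Var 0))).
  repeat split; auto. { rewrite HL. reflexivity. }
  intros i Hi. exists (nth i aP (Var 0)), (nth i aQ (Var 0)); repeat split.
  apply Forall2_nth; auto. lia.
Qed.

Theorem theorem6p6 : forall M N : term,
  (exists N', red N N' /\ (forall M', red M M' -> ~ le_c M' N')) ->
  ~ conv M N.
Proof.
  intros M N [N' [HN Hno]] Hc.
  assert (HcN' : conv M N').
  { eapply rst_trans; [exact Hc | apply clos_rt_clos_rst; exact HN]. }
  destruct (conv_common_reduct _ _ HcN') as [Z [HMZ HN'Z]].
  exact (Hno Z HMZ (red_le_c _ _ HN'Z)).
Qed.
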